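(* Let $d$ be a positive integer, let $0 \le \kappa < d$ be a real number and let $K>0$. Let $N$ be a positive integer and let $S \subseteq [N]^d=\{1,\ldots,N\}^d$ be a set which, for every prime $p$, occupies at most $K p^{\kappa}$ residue classes modulo $p$ (i.e. the image of $S$ in $(\mathbb{Z}/p\mathbb{Z})^d$ has at most $K p^{\kappa}$ elements). Then for every $\varepsilon>0$ there exists a nonzero polynomial $P \in \mathbb{Z}[x_1,\ldots,x_d]$ of complexity at most $C(\log N)^{\frac{\kappa}{d-\kappa}}$ vanishing on at least $(1-\varepsilon)|S|$ points of $S$, where $C$ is a constant depending only on $\kappa, d, \varepsilon$ (and the implied constant $K$), and not on $N$ or $S$.
   Context: A nonzero polynomial in $\mathbb{Z}[x_1,\ldots,x_d]$ is said to have complexity at most $C$ if it has degree at most $C$ and all its coefficients are bounded in absolute value by $N^{C}$. Here $N$ is a parameter tending to infinity; asymptotic statements and constants are uniform in $N$. *)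

From Stdlib Require Import Reals.
From mathcomp Require Import all_boot all_algebra.
From mathcomp Require Import mpoly.
Set Implicit Arguments. Unset Strict Implicit. Unset Printing Implicit Defensive.
Import GRing.Theory Num.Theory.

Definition point (d : nat) := {ffun 'I_d -> int}.

Definition in_box (d N : nat) (x : point d) : bool :=
  [forall i, (1 <= x i)%R && (x i <= N%:Z)%R].

Definition red_mod (d : nat) (p : nat) (x : point d) : point d :=
  [ffun i => ((x i) %% p%:Z)%Z].

Definition n_classes (d : nat) (p : nat) (S : seq (point d)) : nat :=
  size (undup (map (red_mod p) S)).

Definition eval_pt (d : nat) (P : {mpoly int[d]}) (x : point d) : int :=
  P.@[fun i => x i].

Definition n_zeros (d : nat) (P : {mpoly int[d]}) (S : seq (point d)) : nat :=
  size [seq x <- S | eval_pt P x == 0%R].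

(* P has complexity at most B (w.r.t. parameter N): total degree <= B and all
   coefficients bounded in absolute value by N^B. For nonzero P, msize P = 1 + deg P. *)
Definition complexity_le (d N : nat) (P : {mpoly int[d]}) (B : R) : Prop :=
  Rle (INR (msize P).-1) B /\
  forall m : 'X_{1..d}, Rle (INR `|(P@_m)%R|%N) (Rpower (INR N) B).

From Stdlib Require Import Reals Lra ZArith.
From mathcomp Require Import all_boot all_algebra.
From mathcomp Require Import mpoly all_order zify.
Set Implicit Arguments. Unset Strict Implicit. Unset Printing Implicit Defensive.
Import GRing.Theory Num.Theory.

(* A pigeonhole argument modulo primes, in the spirit of Siegel's lemma.
   There are [2 ^ (h t^d)] polynomials with coefficients in [0, 2^h) and
   degree < t in each variable. Modulo a prime p, their values on S depend
   only on the at most [A ~ K p^kappa] residue classes met by S, so modulo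
   all primes of a set s they follow at most [(prod s) ^ A] patterns. With
   more polynomials than patterns, two of them agree modulo every p in s on
   S: their difference P is divisible by [prod s] at each point of S, while
   [|P(x)| <= t^d 2^h N^(t d)], so P vanishes on all of S once [prod s]
   exceeds this bound. The primes dividing [C(2n, n)] are at most 2n and
   have product at least [2^n / (2n)^(sqrt (2n) + 1)]; they provide s, and
   all constraints are met by [2^l ~ N], [h = d t l] and
   [t ~ (log N)^(kappa/(d-kappa))]. *)

(** * Primes dividing central binomial coefficients *)
Lemma sum_indicator_leq m r : \sum_(1 <= k < m.+1) (k <= r : nat) = minn m r.
Proof.
elim: m => [|m IH]; first by rewrite big_geq // min0n.
by rewrite big_nat_recr //= IH; case: (leqP m.+1 r); lia.
Qed.

Lemma divn_double_leq n q : 0 < q -> n.*2 %/ q <= (n %/ q).*2 + 1.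
Proof.
move=> q_gt0; rewrite -ltnS ltn_divLR //.
have := ltn_pmod n q_gt0; have := divn_eq n q; nia.
Qed.

(* Legendre's formula: every term of [logn p (2n)! - 2 logn p n!] is 0 or 1,
   and it vanishes beyond [trunc_log p (2n)]. *)
Lemma logn_central_bin p n : prime p -> logn p 'C(n.*2, n) <= trunc_log p n.*2.
Proof.
move=> p_pr; have p_gt1 := prime_gt1 p_pr.
set r := trunc_log p n.*2.
have binE : 'C(n.*2, n) * (n`! * n`!) = (n.*2)`!.
  by have := bin_fact (leq_addl n n); rewrite addnn (_ : n.*2 - n = n) //; lia.
have lognE : logn p (n.*2)`! = logn p 'C(n.*2, n) + (logn p n`! + logn p n`!).
  by rewrite -binE lognM ?lognM ?muln_gt0 ?bin_gt0 ?fact_gt0 //; lia.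
rewrite !logn_fact // in lognE.
have sum_ext : \sum_(1 <= k < n.+1) n %/ p ^ k = \sum_(1 <= k < n.*2.+1) n %/ p ^ k.
  rewrite [RHS](@big_cat_nat _ _ _ n.+1) //=; last lia.
  rewrite [X in _ = _ + X]big1_seq ?addn0 // => k /andP[_].
  rewrite mem_index_iota => /andP[k_gt_n _].
  by apply: divn_small; have := ltn_expl k p_gt1; lia.
have termwise : \sum_(1 <= k < n.*2.+1) n.*2 %/ p ^ k <=
    \sum_(1 <= k < n.*2.+1) ((n %/ p ^ k).*2 + (k <= r : nat)).
  apply: leq_sum => k _; case: (leqP k r) => k_r.
  - by rewrite addn1 -addn1; apply: divn_double_leq; rewrite expn_gt0; lia.
  - rewrite divn_small ?addn0 // ltnNge; apply/negP => /(trunc_log_max p_gt1); lia.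
rewrite big_split /= sum_indicator_leq -(big_morph double doubleD (erefl 0.*2)) in termwise.
by rewrite sum_ext in lognE; lia.
Qed.

Lemma leq_expn2r m n e : m <= n -> m ^ e <= n ^ e.
Proof. by case: e => [|e] // le_mn; rewrite leq_exp2r. Qed.

Lemma pfactor_central_bin_leq p n :
  prime p -> 0 < n -> p ^ logn p 'C(n.*2, n) <= n.*2.
Proof.
move=> p_pr n_gt0; have p_gt1 := prime_gt1 p_pr.
apply: leq_trans (trunc_logP p_gt1 _); last lia.
by rewrite leq_exp2l // logn_central_bin.
Qed.

Lemma bin_leq_exp2 m k : 'C(m, k) <= 2 ^ m.
Proof.
elim: m k => [|m IH] [|k] //; first by rewrite bin0 expn_gt0.
by rewrite binS expnS; have := IH k.+1; have := IH k; lia.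
Qed.

Lemma exp2_leq_central_bin n : 2 ^ n <= 'C(n.*2, n).
Proof.
elim: n => [|n IH] //.
have rec : n.+1 * 'C(n.+1.*2, n.+1) = (n.*2.+1).*2 * 'C(n.*2, n).
  have e1 := mul_bin_down n.*2.+1 n; have e2 := mul_bin_diag n.*2.+2 n.
  rewrite /= in e2; rewrite /= (_ : n.*2.+1 - n = n.+1) in e1; last lia.
  rewrite doubleS; apply/eqP; rewrite -(eqn_pmul2l (ltn0Sn n)); apply/eqP; nia.
by rewrite expnS; nia.
Qed.

Lemma prod_primes_central_bin_geq n b : 0 < n -> n.*2 <= b * b ->
  'C(n.*2, n) <= \prod_(p <- primes 'C(n.*2, n)) p * n.*2 ^ b.+1.
Proof.
move=> n_gt0 nb; set m := 'C(n.*2, n).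
have m_gt0 : 0 < m by rewrite bin_gt0; lia.
have pfactorE : m = \prod_(p <- primes m) p ^ logn p m.
  by rewrite {1}(prod_prime_decomp m_gt0) prime_decompE big_map.
pose small p := p * p <= n.*2.
have small_count : count small (primes m) <= b.+1.
  rewrite -size_filter -[b.+1](size_iota 0); apply: uniq_leq_size.
    exact/filter_uniq/primes_uniq.
  move=> p; rewrite mem_filter mem_iota /small add0n ltnS => /andP[pp _] /=.
  by apply: contraLR pp; rewrite -!ltnNge => b_lt; exact: leq_ltn_trans nb (ltn_mul b_lt b_lt).
apply: leq_trans (_ : \prod_(p <- primes m) (p * (if small p then n.*2 else 1)) <= _).
  rewrite {1}pfactorE !big_seq; apply: leq_prod => p; rewrite mem_primes.
  move=> /and3P[p_pr _ _]; have p_gt0 := prime_gt0 p_pr.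
  have vp_le := pfactor_central_bin_leq p_pr n_gt0.
  case: ifP => [_|/negbT p_large]; first by apply: leq_trans vp_le _; rewrite leq_pmull.
  rewrite muln1; case: (leqP (logn p m) 1) => [v_le1|v_gt1].
  - by apply: leq_trans (leq_pexp2l p_gt0 v_le1) _; rewrite expn1.
  - have : p ^ 2 <= p ^ logn p m by apply: leq_pexp2l.
    by rewrite /small -ltnNge in p_large; rewrite -/m expnS expn1 in vp_le *; lia.
rewrite big_split /= leq_mul2l; apply/orP; right.
apply: leq_trans (_ : n.*2 ^ count small (primes m) <= _); last first.
  by apply: leq_pexp2l; lia.
by elim: (primes m) => [|q s IH]; rewrite ?big_nil // big_cons /=; case: ifP;
  rewrite ?expnS ?mul1n ?leq_mul2l ?IH ?orbT.
Qed.

Lemma exists_square_pow2_window Y :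
  exists j, [/\ 6 <= j, Y < 2 ^ j * 2 ^ j & 2 ^ j * 2 ^ j <= 4 * Y + 4096].
Proof.
elim: Y => [|Y [j [j_ge6 lo hi]]]; first by exists 6.
case: (ltnP Y.+1 (2 ^ j * 2 ^ j)) => Y_lt; first by exists j; split; lia.
by exists j.+1; rewrite expnS; split; nia.
Qed.

Lemma linear_leq_exp2 j : 6 <= j -> 8 * j.+1 <= 2 ^ j.
Proof.
elim: j => [|j IH] // j_ge6; case: (ltnP j 6) => j_lt6; first by have -> : j = 5 by lia.
by rewrite expnS; have := IH j_lt6; lia.
Qed.

(* [s] is the set of primes dividing [C(2n, n)] with [n = 2 * 4^j], [4^j ~ Y]. *)
Lemma exists_primes_prod_window Y : exists s : seq nat,
  [/\ uniq s, all prime s, 2 ^ Y < \prod_(p <- s) p,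
      \prod_(p <- s) p <= 2 ^ (16 * (Y + 1024)) &
      all (fun p => p <= 16 * (Y + 1024)) s].
Proof.
have [j [j_ge6 Y_lt a_le]] := exists_square_pow2_window Y.
set a := 2 ^ j in Y_lt a_le; have j_small := linear_leq_exp2 j_ge6.
set n := 2 * (a * a); have n_gt0 : 0 < n by lia.
set m := 'C(n.*2, n); have m_gt0 : 0 < m by rewrite bin_gt0; lia.
have p_leq_2n p : p \in primes m -> p <= n.*2.
  move=> p_m; have p_pr : prime p by move: p_m; rewrite mem_primes => /andP[].
  apply: leq_trans (pfactor_central_bin_leq p_pr n_gt0).
  by rewrite -{1}(expn1 p); apply: leq_pexp2l; [exact: prime_gt0 | rewrite logn_gt0].
have prod_le_m : \prod_(p <- primes m) p <= m.
  rewrite {2}(prod_prime_decomp m_gt0) prime_decompE big_map !big_seq.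
  apply: leq_prod => p p_m; have p_pr : prime p by move: p_m; rewrite mem_primes => /andP[].
  by rewrite -{1}(expn1 p); apply: leq_pexp2l; [exact: prime_gt0 | rewrite logn_gt0].
exists (primes m); split.
- exact: primes_uniq.
- exact: all_prime_primes.
- have two_n : n.*2 = 2 ^ j.*2.+2 by rewrite -[j.*2]addnn !expnS expnD /n /a; lia.
  have lower : 2 ^ n <= \prod_(p <- primes m) p * 2 ^ (j.*2.+2 * (2 * a).+1).
    rewrite expnM -two_n; apply: leq_trans (exp2_leq_central_bin n) _.
    by apply: prod_primes_central_bin_geq => //; rewrite /n; lia.
  rewrite ltnNge; apply/negP => prod_le.
  have : 2 ^ n <= 2 ^ (Y + j.*2.+2 * (2 * a).+1).
    by apply: leq_trans lower _; rewrite expnD leq_mul2r prod_le orbT.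
  by rewrite leq_exp2l // /n; nia.
- apply: leq_trans prod_le_m _; apply: leq_trans (bin_leq_exp2 _ _) _.
  by rewrite leq_exp2l // /n; lia.
- by apply/allP => p /p_leq_2n; rewrite /n; lia.
Qed.

(** * Siegel's lemma modulo primes *)

(* A list of (digit, base) pairs, read as a number in mixed radix, least
   significant digit first. *)
Fixpoint mixed_radix (l : seq (nat * nat)) : nat :=
  if l is q :: r then q.1 + q.2 * mixed_radix r else 0.

Lemma mixed_radix_lt l :
  all (fun q => q.1 < q.2) l -> mixed_radix l < \prod_(q <- l) q.2.
Proof.
elim: l => [|[v b] r IH] /=; first by rewrite big_nil.
by move=> /andP[v_lt r_lt]; rewrite big_cons /=; have := IH r_lt; nia.
Qed.

Lemma mixed_radix_inj l1 l2 : map snd l1 = map snd l2 ->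
  all (fun q => q.1 < q.2) l1 -> all (fun q => q.1 < q.2) l2 ->
  mixed_radix l1 = mixed_radix l2 -> l1 = l2.
Proof.
elim: l1 l2 => [|[v1 b] r1 IH] [|[v2 b2] r2] //= [<- eq_r] /andP[v1_lt r1_lt] /andP[v2_lt r2_lt].
rewrite /= !(mulnC b) (addnC v1) (addnC v2) => eq_enc.
have := congr1 (modn^~ b) eq_enc; rewrite !modnMDl !modn_small // => <-.
have := congr1 (divn^~ b) eq_enc; rewrite !divnMDl ?divn_small ?addn0; try lia.
by move=> /(IH r2 eq_r r1_lt r2_lt) ->.
Qed.

Lemma eq_in_flatten_map (T : eqType) (U : Type) (F G : T -> seq U) (s : seq T) :
  (forall x, size (F x) = size (G x)) ->
  flatten (map F s) = flatten (map G s) -> {in s, F =1 G}.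
Proof.
move=> eq_size; elim: s => [|y s IH] //= eq_flat x; rewrite inE => /orP[/eqP ->|x_s].
- by have := congr1 (take (size (F y))) eq_flat; rewrite !take_size_cat ?eq_size.
- by apply: IH x_s; have := congr1 (drop (size (F y))) eq_flat; rewrite !drop_size_cat ?eq_size.
Qed.

Lemma prod_uniq_primes_dvd (s : seq nat) z : uniq s -> all prime s ->
  all (dvdn^~ z) s -> \prod_(p <- s) p %| z.
Proof.
elim: s => [|p s IH] /=; first by rewrite big_nil dvd1n.
move=> /andP[p_s s_uniq] /andP[p_pr s_pr] /andP[p_z s_z].
rewrite big_cons Gauss_dvd ?p_z ?IH // prime_coprime // Euclid_dvd_prod //.
rewrite big_has; apply/hasPn => q q_s; have q_pr := allP s_pr q q_s.
by rewrite dvdn_prime2 //; apply: contraNneq p_s => ->.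
Qed.

Local Open Scope ring_scope.

Lemma eval_pt_red_mod d (P : {mpoly int[d]}) (x : point d) (p : nat) :
  (eval_pt P x = eval_pt P (red_mod p x) %[mod p])%Z.
Proof.
rewrite /eval_pt !mevalE; apply: (@big_ind2 _ _ (fun a b : int => (a = b %[mod p])%Z)) => //.
  by move=> a1 a2 b1 b2 e1 e2; rewrite -modzDm e1 e2 modzDm.
move=> m _; rewrite -modzMmr.
suff -> : (\prod_i x i ^+ m i = \prod_i red_mod p x i ^+ m i %[mod p])%Z by rewrite modzMmr.
apply: (@big_ind2 _ _ (fun a b : int => (a = b %[mod p])%Z)) => //.
  by move=> a1 a2 b1 b2 e1 e2; rewrite -modzMm e1 e2 modzMm.
by move=> i _; rewrite -modzXm ffunE.
Qed.

Section BoxPolynomials.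
Import Order.TTheory.
Variables d t : nat.
Local Notation exps := {ffun 'I_d -> 'I_t}.

Definition box_mon (e : exps) : 'X_{1..d} := [multinom (e i : nat) | i < d].

Definition box_poly (c : exps -> int) : {mpoly int[d]} :=
  \sum_(e : exps) c e *: 'X_[box_mon e].

Lemma box_mon_inj : injective box_mon.
Proof.
move=> e1 e2 /mnmP eq_e; apply/ffunP => i; apply/val_inj.
by have := eq_e i; rewrite !mnmE.
Qed.

Lemma mcoeff_box_poly c m :
  (box_poly c)@_m = \sum_(e : exps) c e * (box_mon e == m)%:R.
Proof. by rewrite /box_poly raddf_sum; apply: eq_bigr => e _; rewrite /= mcoeffZ mcoeffX. Qed.

Lemma mcoeff_box_poly_mon c e : (box_poly c)@_(box_mon e) = c e.
Proof.
rewrite mcoeff_box_poly (bigD1 e) //= eqxx mulr1 big1 ?addr0 // => e' ne_e.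
by rewrite (inj_eq box_mon_inj) (negbTE ne_e) mulr0.
Qed.

Lemma mcoeff_box_poly_out c m : (forall e, box_mon e != m) -> (box_poly c)@_m = 0.
Proof. by move=> out; rewrite mcoeff_box_poly big1 // => e _; rewrite (negbTE (out e)) mulr0. Qed.

Lemma norm_mcoeff_box_poly_le c (B : int) :
  0 <= B -> (forall e, `|c e| <= B) -> forall m, `|(box_poly c)@_m| <= B.
Proof.
move=> B_ge0 c_le m; case: (pickP (fun e => box_mon e == m)) => [e /eqP <-|out].
  by rewrite mcoeff_box_poly_mon.
by rewrite mcoeff_box_poly_out ?normr0 // => e; rewrite out.
Qed.

Lemma msize_box_poly c : (msize (box_poly c) <= (t.-1 * d).+1)%N.
Proof.
apply: leq_trans (msize_sum _ _ _) _; apply/bigmax_leqP => e _.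
apply: leq_trans (msizeZ_le _ _) _; rewrite msizeX ltnS mdegE.
apply: leq_trans (_ : (\sum_(i < d) t.-1 <= _)%N); last by rewrite sum_nat_const card_ord mulnC.
apply: leq_sum => i _; have t_gt0 := leq_ltn_trans (leq0n _) (ltn_ord (e i)).
by rewrite /box_mon mnmE -ltnS prednK.
Qed.

Lemma box_poly_neq0 c e : c e != 0 -> box_poly c != 0.
Proof. by apply: contraNneq => c0; rewrite -(mcoeff_box_poly_mon c e) c0 mcoeff0. Qed.

Lemma eval_box_poly c x :
  eval_pt (box_poly c) x = \sum_(e : exps) c e * \prod_(i < d) x i ^+ e i.
Proof.
rewrite /eval_pt /box_poly raddf_sum; apply: eq_bigr => e _.
by rewrite /= mevalZ mevalX; congr (_ * _); apply: eq_bigr => i _; rewrite mnmE.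
Qed.

Lemma norm_eval_box_poly_le N (B : nat) c x : (0 < N)%N -> in_box N x ->
  (forall e, `|c e| <= B%:Z) -> `|eval_pt (box_poly c) x| <= (t ^ d * B * N ^ (t * d))%N%:Z.
Proof.
move=> N_gt0 /forallP x_box c_le; rewrite eval_box_poly.
have N_ge1 : 1 <= N%:Z :> int by rewrite lez_nat.
have mon_le (e : exps) : `|\prod_(i < d) x i ^+ e i| <= (N ^ (t * d))%N%:Z.
  rewrite -natz natrX natz exprM -[X in _ ^+ X](card_ord d) -prodr_const normr_prod.
  apply: ler_prod => i _; rewrite normr_ge0 normrX /=.
  have /andP[x_ge1 x_leN] := x_box i; have x_ge0 := le_trans ler01 x_ge1.
  rewrite ger0_norm //; apply: le_trans (ler_weXn2l N_ge1 (ltnW (ltn_ord (e i)))).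
  by apply: lerXn2r; rewrite ?nnegrE // (le_trans ler01 N_ge1).
apply: le_trans (ler_norm_sum _ _ _) _.
apply: le_trans (_ : \sum_(e : exps) (B%:Z * (N ^ (t * d))%N%:Z) <= _).
  by apply: ler_sum => e _; rewrite normrM; apply: ler_pM.
by rewrite sumr_const card_ffun !card_ord -mulr_natl natz -!PoszM mulnA.
Qed.

End BoxPolynomials.

Definition zres (p : nat) (z : int) : nat := `|(z %% p%:Z)%Z|%N.

Lemma zres_lt p z : (0 < p)%N -> (zres p z < p)%N.
Proof.
move=> p_gt0; have p_neq0 : p%:Z != 0 by rewrite eqz_nat -lt0n.
by rewrite /zres -ltz_nat gez0_abs ?modz_ge0 // ltz_pmod.
Qed.

Lemma zres_eqP p a b : (0 < p)%N -> zres p a = zres p b -> (a = b %[mod p])%Z.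
Proof.
move=> p_gt0; have p_neq0 : p%:Z != 0 by rewrite eqz_nat -lt0n.
by rewrite /zres -{2}(gez0_abs (modz_ge0 a p_neq0)) -(gez0_abs (modz_ge0 b p_neq0)) => ->.
Qed.

Lemma prod_bases_classes_leq d (S : seq (point d)) (s : seq nat) A :
  all prime s -> (forall p, p \in s -> (n_classes p S <= A)%N) ->
  (\prod_(b <- flatten [seq [seq p | u <- undup (map (red_mod p) S)] | p <- s]) b
     <= (\prod_(p <- s) p) ^ A)%N.
Proof.
elim: s => [|p s IH] /= s_pr classes_le; first by rewrite !big_nil exp1n.
move: s_pr => /andP[p_pr s_pr].
rewrite big_cat big_cons expnMn big_map big_const_seq count_predT iter_muln_1.
apply: leq_mul; last by apply: IH => // q q_s; apply: classes_le; rewrite inE q_s orbT.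
by apply: leq_pexp2l; [exact: prime_gt0 | apply: classes_le; rewrite mem_head].
Qed.

(* Modulo a prime p, the values of [f i] on [S] are determined by its values
   at one point of each of the at most [A] residue classes met by [S]; the
   pattern of these residues over all p in [s] is encoded injectively as one
   mixed-radix number. *)
Lemma exists_congruent_evals d (T : finType) (f : T -> {mpoly int[d]})
    (S : seq (point d)) (s : seq nat) A :
  all prime s -> (forall p, p \in s -> (n_classes p S <= A)%N) ->
  ((\prod_(p <- s) p) ^ A < #|T|)%N ->
  exists i j, i != j /\
    forall p x, p \in s -> x \in S -> (eval_pt (f i) x = eval_pt (f j) x %[mod p])%Z.
Proof.
move=> s_pr classes_le card_T.
pose classes p := undup (map (red_mod p) S).
pose pattern i := flatten [seq [seq (zres p (eval_pt (f i) u), p) | u <- classes p] | p <- s].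
pose bases := flatten [seq [seq p | u <- classes p] | p <- s].
have pattern_bases i : map snd (pattern i) = bases.
  rewrite map_flatten -map_comp; congr flatten.
  by apply: eq_map => p /=; rewrite -map_comp.
have pattern_lt i : all (fun q => q.1 < q.2)%N (pattern i).
  apply/allP => q /flattenP[l /mapP[p p_s ->] /mapP[u _ ->]] /=.
  exact/zres_lt/prime_gt0/(allP s_pr).
have code_lt i : (mixed_radix (pattern i) < \prod_(b <- bases) b)%N.
  by rewrite -(pattern_bases i) big_map; exact: mixed_radix_lt.
have /injectivePn[i [j ne_ij eq_code]] : ~~ injectiveb (fun i => Ordinal (code_lt i)).
  apply/injectiveP => /leq_card; rewrite card_ord => card_le.
  have := prod_bases_classes_leq s_pr classes_le.
  by move=> /(leq_trans card_le)/leq_ltn_trans/(_ card_T); rewrite ltnn.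
have eq_pattern : pattern i = pattern j.
  apply: (mixed_radix_inj _ (pattern_lt i) (pattern_lt j) (congr1 val eq_code)).
  by rewrite !pattern_bases.
exists i, j; split=> // p x p_s x_S.
have p_gt0 := prime_gt0 (allP s_pr p p_s).
have x_class : red_mod p x \in classes p by rewrite mem_undup map_f.
have same_size q : size [seq (zres q (eval_pt (f i) u), q) | u <- classes q] =
                   size [seq (zres q (eval_pt (f j) u), q) | u <- classes q].
  by rewrite !size_map.
have /eq_in_map/(_ _ x_class)[eq_res] := eq_in_flatten_map same_size eq_pattern p_s.
by rewrite eval_pt_red_mod (zres_eqP p_gt0 eq_res) -eval_pt_red_mod.
Qed.

Lemma eq0_of_prod_primes_dvdz (s : seq nat) (z : int) : uniq s -> all prime s ->
  (forall p, p \in s -> (p%:Z %| z)%Z) -> (`|z| < \prod_(p <- s) p)%N -> z = 0.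
Proof.
move=> s_uniq s_pr dvd_z z_lt; apply/eqP; rewrite -absz_eq0.
have : (\prod_(p <- s) p %| `|z|)%N.
  by apply: prod_uniq_primes_dvd => //; apply/allP => p /dvd_z; rewrite dvdzE.
by case: (posnP `|z|%N) => // z_pos /(dvdn_leq z_pos); lia.
Qed.

Lemma exists_box_poly_vanishing d N t h A (S : seq (point d)) (s : seq nat) :
  (0 < N)%N -> uniq s -> all prime s -> all (in_box N) S ->
  (forall p, p \in s -> (n_classes p S <= A)%N) ->
  (t ^ d * 2 ^ h * N ^ (t * d) < \prod_(p <- s) p)%N ->
  ((\prod_(p <- s) p) ^ A < 2 ^ (h * t ^ d))%N ->
  exists P : {mpoly int[d]}, [/\ P != 0, (msize P <= (t.-1 * d).+1)%N,
     forall m, `|P@_m| <= (2 ^ h)%N%:Z & all (fun x => eval_pt P x == 0) S].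
Proof.
move=> N_gt0 s_uniq s_pr S_box classes_le eval_lt patterns_lt.
pose coef (c : {ffun {ffun 'I_d -> 'I_t} -> 'I_(2 ^ h)}) e := (c e : nat)%:Z.
have card_coefs : #|{ffun {ffun 'I_d -> 'I_t} -> 'I_(2 ^ h)}| = (2 ^ (h * t ^ d))%N.
  by rewrite !card_ffun !card_ord expnM.
rewrite -card_coefs in patterns_lt.
have [c1 [c2 [ne_c cong]]] :=
  exists_congruent_evals (fun c => box_poly (coef c)) s_pr classes_le patterns_lt.
have [e ne_e] : exists e, c1 e != c2 e.
  case: (pickP (fun e => c1 e != c2 e)) => [e|same]; first by exists e.
  by case/eqP: ne_c; apply/ffunP => e; apply/eqP/negbFE/same.
pose c e := coef c1 e - coef c2 e.
have c_le e' : `|c e'| <= (2 ^ h)%N%:Z.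
  rewrite /c /coef ler_norml; have := ltn_ord (c1 e'); have := ltn_ord (c2 e').
  by set H := (2 ^ h)%N; set u := nat_of_ord (c1 e'); set v := nat_of_ord (c2 e'); lia.
have box_poly_c : box_poly c = box_poly (coef c1) - box_poly (coef c2).
  by rewrite /box_poly -sumrB; apply: eq_bigr => e' _; rewrite scalerBl.
exists (box_poly c); split.
- apply: (box_poly_neq0 (e := e)); rewrite /c /coef subr_eq0 eqz_nat.
  by apply: contra ne_e => /eqP eq_ce; apply/eqP/val_inj.
- exact: msize_box_poly.
- exact: norm_mcoeff_box_poly_le.
- apply/allP => x x_S; apply/eqP; apply: (eq0_of_prod_primes_dvdz s_uniq s_pr).
  + move=> p p_s; rewrite /eval_pt box_poly_c mevalB -eqz_mod_dvd; apply/eqP.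
    exact: cong.
  + apply: leq_ltn_trans eval_lt; rewrite -lez_nat abszE.
    exact: norm_eval_box_poly_le (allP S_box x x_S) c_le.
Qed.

(** * Choice of parameters *)

Local Open Scope R_scope.

Lemma Rpower_gt0 x y : 0 < Rpower x y.
Proof. exact: exp_pos. Qed.

Lemma Rpower_ge1 x y : 1 <= x -> 0 <= y -> 1 <= Rpower x y.
Proof. by move=> x_ge1 y_ge0; rewrite -(Rpower_O x); [apply: Rle_Rpower | lra]. Qed.

Lemma lt_Rpower_of_root_lt y e t : 0 < y -> 0 < e -> Rpower y (/ e) < t -> y < Rpower t e.
Proof.
move=> y_gt0 e_gt0 root_lt; have root_gt0 := Rpower_gt0 y (/ e).
rewrite -[X in X < _](Rpower_1 y) // -(Rinv_l e); last lra.
by rewrite -Rpower_mult; apply: Rlt_Rpower_l.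
Qed.

Lemma ln_le x y : 0 < x -> x <= y -> ln x <= ln y.
Proof. by move=> x_gt0 [/(ln_increasing _ _ x_gt0)/Rlt_le | ->] //; apply: Rle_refl. Qed.

Section ParameterBudget.
Variables d kappa K c2 : R.
Hypotheses (d_gt0 : 0 < d) (kappa_ge0 : 0 <= kappa) (kappa_lt_d : kappa < d).
Hypotheses (K_gt0 : 0 < K) (c2_gt0 : 0 < c2).

Definition budget_const := (K + 1) * Rpower c2 (1 + kappa) / d + 1.

Lemma budget_const_gt0 : 0 < budget_const.
Proof.
have c2_pow := Rpower_gt0 c2 (1 + kappa); have d_inv := Rinv_0_lt_compat d d_gt0.
suff : 0 < (K + 1) * Rpower c2 (1 + kappa) / d by rewrite /budget_const; lra.
by repeat apply: Rmult_lt_0_compat; lra.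
Qed.

(* With [D <= c2 t l] and [A ~ K D^kappa], [D A] is [O((t l)^(1 + kappa))];
   it is beaten by [d l t^(d + 1)] as soon as [t^(d - kappa)] dominates
   [l^kappa]. *)
Lemma budget_lt t l D A : 1 <= t -> 1 <= l -> 1 <= D -> D <= c2 * t * l ->
  A <= K * Rpower D kappa + 1 -> budget_const * Rpower l kappa < Rpower t (d - kappa) ->
  D * A < d * t * l * Rpower t d.
Proof.
move=> t_ge1 l_ge1 D_ge1 D_le A_le t_large.
have Dk_ge1 : 1 <= Rpower D kappa by apply: Rpower_ge1.
have DA_le : D * A <= (K + 1) * Rpower D (1 + kappa).
  by rewrite Rpower_plus Rpower_1; [nra | lra].
have D_pow_le : Rpower D (1 + kappa) <=
    Rpower c2 (1 + kappa) * (Rpower t (1 + kappa) * (l * Rpower l kappa)).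
  rewrite -{1}(Rpower_1 l); last lra.
  rewrite -Rpower_plus !Rpower_mult_distr; try lra; last by apply: Rmult_lt_0_compat; lra.
  by apply: Rle_Rpower_l; [lra | split; [lra | rewrite -Rmult_assoc]].
have t_pow : Rpower t d = Rpower t (1 + kappa) * Rpower t (d - kappa) / t.
  rewrite -Rpower_plus (_ : 1 + kappa + (d - kappa) = 1 + d); last ring.
  by rewrite Rpower_plus Rpower_1; [field | ]; lra.
set T := Rpower t (1 + kappa) in D_pow_le t_pow; have T_gt0 : 0 < T by apply: Rpower_gt0.
set P := Rpower c2 (1 + kappa) in D_pow_le; have P_gt0 : 0 < P by apply: Rpower_gt0.
set L := Rpower l kappa in D_pow_le t_large; have L_gt0 : 0 < L by apply: Rpower_gt0.
rewrite t_pow (_ : d * t * l * (T * Rpower t (d - kappa) / t) = d * l * T * Rpower t (d - kappa));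
  last by field; lra.
have : d * l * T * (budget_const * L) < d * l * T * Rpower t (d - kappa).
  by apply: Rmult_lt_compat_l => //; repeat apply: Rmult_lt_0_compat; lra.
have const_eq : (K + 1) * P = d * budget_const - d by rewrite /budget_const -/P; field; lra.
have : (K + 1) * Rpower D (1 + kappa) <= (K + 1) * (P * (T * (l * L))).
  by apply: Rmult_le_compat_l; lra.
have : 0 < d * l * T * L by repeat apply: Rmult_lt_0_compat; lra.
rewrite (_ : (K + 1) * (P * (T * (l * L))) = (K + 1) * P * (l * T * L)); last ring.
rewrite const_eq; lra.
Qed.

Definition degree_const :=
  Rpower budget_const (/ (d - kappa)) * Rpower (2 / ln 2) (kappa / (d - kappa))
  + Rpower (/ ln 2) (kappa / (d - kappa)).

Lemma ceil_root_le_log_power N l t : 2 <= N -> 1 <= l -> l <= 2 * ln N / ln 2 ->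
  t <= Rpower (budget_const * Rpower l kappa) (/ (d - kappa)) + 1 ->
  t <= degree_const * Rpower (ln N) (kappa / (d - kappa)).
Proof.
move=> N_ge2 l_ge1 l_le t_le.
have a_ge0 : 0 <= kappa / (d - kappa).
  by apply: Rmult_le_pos; [lra | apply/Rlt_le/Rinv_0_lt_compat; lra].
set a := kappa / (d - kappa) in a_ge0 *.
have ln2_gt0 : 0 < ln 2 by have := ln_lt_2; lra.
have lnN_ge : ln 2 <= ln N by apply: ln_le; lra.
have root_eq : Rpower (budget_const * Rpower l kappa) (/ (d - kappa)) =
               Rpower budget_const (/ (d - kappa)) * Rpower l a.
  rewrite -Rpower_mult_distr ?Rpower_mult //; [exact: budget_const_gt0 | exact: Rpower_gt0].
have l_pow_le : Rpower l a <= Rpower (2 / ln 2) a * Rpower (ln N) a.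
  rewrite Rpower_mult_distr; try lra; last by apply: Rdiv_lt_0_compat; lra.
  apply: Rle_Rpower_l => //; split; first lra.
  by rewrite (_ : 2 / ln 2 * ln N = 2 * ln N / ln 2) //; field; lra.
have one_le : 1 <= Rpower (/ ln 2) a * Rpower (ln N) a.
  rewrite Rpower_mult_distr; try lra; last exact: Rinv_0_lt_compat.
  apply: Rpower_ge1 => //; rewrite -(Rinv_l (ln 2)); last lra.
  by apply: Rmult_le_compat_l; first exact/Rlt_le/Rinv_0_lt_compat.
have root_gt0 := Rpower_gt0 budget_const (/ (d - kappa)).
have := Rmult_le_compat_l _ _ _ (Rlt_le _ _ root_gt0) l_pow_le.
by rewrite /degree_const -/a; lra.
Qed.

End ParameterBudget.

Lemma INR_muln m n : INR (m * n) = INR m * INR n.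
Proof. by rewrite -multE mult_INR. Qed.

Lemma INR_expn m n : INR (m ^ n) = INR m ^ n.
Proof. by elim: n => [|n IH] //=; rewrite expnS INR_muln IH. Qed.

Lemma exists_nat_ceil r : 0 < r -> exists n : nat, [/\ (0 < n)%N, r < INR n & INR n <= r + 1].
Proof.
move=> r_gt0; have [up_gt up_le] := archimed r.
have up_ge0 : Z.le 0 (up r) by apply: le_IZR; lra.
have INR_up : INR (Z.to_nat (up r)) = IZR (up r) by rewrite INR_IZR_INZ Z2Nat.id.
exists (Z.to_nat (up r)); rewrite INR_up; split; try lra.
by apply/ltP/INR_lt; rewrite INR_up /=; lra.
Qed.

Lemma exists_log2_window N : (2 <= N)%N ->
  exists l : nat,
    [/\ (N < 2 ^ l)%N, (2 ^ l <= N * N)%N, 1 <= INR l & INR l <= 2 * ln (INR N) / ln 2].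
Proof.
move=> N_ge2; exists (trunc_log 2 N).+1.
have N_lo : (2 ^ trunc_log 2 N <= N)%N by apply: trunc_logP; lia.
have ln2_gt0 : 0 < ln 2 by have := ln_lt_2; lra.
have N_ge2R : 2 <= INR N by apply: (le_INR 2); apply/leP.
split; first exact: trunc_log_ltn.
- by rewrite expnS; nia.
- by apply: (le_INR 1); apply/leP.
have lnN_ge := ln_le Rlt_0_2 N_ge2R.
have : INR (2 ^ trunc_log 2 N) <= INR N by apply/le_INR/leP.
rewrite INR_expn => /(ln_le (pow_lt 2 _ Rlt_0_2)); rewrite ln_pow ?S_INR; last lra.
move=> l_ln; apply: (Rmult_le_reg_r (ln 2)) => //.
by rewrite /Rdiv Rmult_assoc Rinv_l; lra.
Qed.

(* [16 (Y + 1024)] as in [exists_primes_prod_window], where [2 ^ Y] bounds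
   [t ^ d * 2 ^ (d t l) * N ^ (t d)] once [N < 2 ^ l]. *)
Definition prime_cutoff (d t l : nat) : nat :=
  16 * (t * d + d * t * l + l * (t * d) + 1024).

Lemma exists_parameters (d : nat) kappa K :
  (0 < d)%N -> 0 <= kappa -> kappa < INR d -> 0 < K ->
  exists C : R, forall N : nat, (2 <= N)%N -> exists t l A : nat,
    [/\ (N < 2 ^ l)%N && (2 ^ l <= N * N)%N,
      (forall p : nat, (0 < p)%N -> (p <= prime_cutoff d t l)%N ->
         K * Rpower (INR p) kappa < INR A),
      (prime_cutoff d t l * A < d * t * l * t ^ d)%N &
      INR (2 * d * t) <= C * Rpower (ln (INR N)) (kappa / (INR d - kappa))].
Proof.
move=> d_gt0 kappa_ge0 kappa_lt K_gt0.
have dR_gt0 : 0 < INR d by apply/lt_0_INR/ltP.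
(* chosen so that [prime_cutoff d t l <= c2 t l] *)
set c2 := INR (48 * d + 16 * 1024).
have c2_gt0 : 0 < c2 by apply/lt_0_INR/ltP; lia.
exists (2 * INR d * degree_const (INR d) kappa K c2) => N N_ge2.
have [l [N_lt l_le l_ge1 l_log]] := exists_log2_window N_ge2.
set X := Rpower (budget_const (INR d) kappa K c2 * Rpower (INR l) kappa) (/ (INR d - kappa)).
have [t [t_gt0 X_lt t_le]] := exists_nat_ceil (Rpower_gt0 _ _ : 0 < X).
set D := prime_cutoff d t l.
have [A [_ A_gt A_le]] :=
  exists_nat_ceil (Rmult_lt_0_compat _ _ K_gt0 (Rpower_gt0 (INR D) kappa)).
exists t, l, A; split.
- by rewrite N_lt l_le.
- move=> p p_gt0 p_le; apply: Rle_lt_trans A_gt; apply: Rmult_le_compat_l; first lra.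
  by apply: Rle_Rpower_l => //; split; [apply/lt_0_INR/ltP | apply/le_INR/leP].
- have t_ge1 : 1 <= INR t by apply: (le_INR 1); apply/leP.
  have D_ge1 : 1 <= INR D by apply: (le_INR 1); apply/leP; rewrite /D /prime_cutoff; lia.
  have l_gt0 : (0 < l)%N by apply/ltP/INR_lt => /=; lra.
  have D_le : INR D <= c2 * INR t * INR l.
    by rewrite -!INR_muln; apply/le_INR/leP; rewrite /D /prime_cutoff; nia.
  have t_large : budget_const (INR d) kappa K c2 * Rpower (INR l) kappa <
                 Rpower (INR t) (INR d - kappa).
    apply: lt_Rpower_of_root_lt X_lt; last lra.
    by apply: Rmult_lt_0_compat; [exact: budget_const_gt0 | exact: Rpower_gt0].
  have := budget_lt dR_gt0 kappa_ge0 K_gt0 c2_gt0 t_ge1 l_ge1 D_ge1 D_le A_le t_large.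
  by rewrite Rpower_pow; [rewrite -INR_expn -!INR_muln => /INR_lt/ltP | lra].
- rewrite !INR_muln (_ : INR 2 = 2) // !Rmult_assoc.
  do 2 (apply: Rmult_le_compat_l; first lra).
  have N_ge2R : 2 <= INR N by apply: (le_INR 2); apply/leP.
  exact: (ceil_root_le_log_power dR_gt0 kappa_ge0 kappa_lt K_gt0 N_ge2R l_ge1 l_log t_le).
Qed.

Lemma complexity_le_of_bounds d N t l (P : {mpoly int[d]}) (B : R) :
  (2 <= N)%N -> (2 ^ l <= N * N)%N -> (msize P <= (t.-1 * d).+1)%N ->
  (forall m, (`|P@_m| <= (2 ^ (d * t * l))%N%:Z)%R) -> INR (2 * d * t) <= B ->
  complexity_le N P B.
Proof.
move=> N_ge2 l_le P_size P_coef deg_le; split.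
  by apply: Rle_trans deg_le; apply/le_INR/leP; move: P_size; nia.
move=> m; have coef_le : (`|P@_m| <= N ^ (2 * d * t))%N.
  have := P_coef m; rewrite -abszE lez_nat => /leq_trans; apply.
  have -> : (d * t * l = l * (d * t))%N by rewrite mulnC.
  by rewrite -mulnA expnM [X in (_ <= X)%N]expnM; apply: leq_expn2r; rewrite expnS expn1.
apply: Rle_trans (_ : INR (N ^ (2 * d * t)) <= _); first exact/le_INR/leP.
rewrite INR_expn -Rpower_pow; last by apply/lt_0_INR/ltP; lia.
by apply: Rle_Rpower => //; apply: (le_INR 1); apply/leP; lia.
Qed.

Theorem theorem1p2 (d : nat) (kappa K eps : R) :
  (0 < d)%N -> Rle 0 kappa -> Rlt kappa (INR d) -> Rlt 0 K -> Rlt 0 eps ->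
  exists C : R,
    forall (N : nat) (S : seq (point d)),
      (2 <= N)%N ->
      uniq S ->
      all (in_box N) S ->
      (forall p : nat, prime p -> Rle (INR (n_classes p S)) (Rmult K (Rpower (INR p) kappa))) ->
      exists P : {mpoly int[d]},
        P != 0%R /\
        complexity_le N P (Rmult C (Rpower (ln (INR N)) (Rdiv kappa (Rminus (INR d) kappa)))) /\
        Rle (Rmult (Rminus 1 eps) (INR (size S))) (INR (n_zeros P S)).
Proof.
move=> d_gt0 kappa_ge0 kappa_lt K_gt0 eps_gt0.
have [C params] := exists_parameters d_gt0 kappa_ge0 kappa_lt K_gt0.
exists C => N S N_ge2 _ S_box S_classes.
have [t [l [A [/andP[N_lt l_le] A_large budget deg_le]]]] := params N N_ge2.
have [s [s_uniq s_pr prod_gt prod_le s_le]] :=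
  exists_primes_prod_window (t * d + d * t * l + l * (t * d)).
have classes_le p : p \in s -> (n_classes p S <= A)%N.
  move=> p_s; have p_pr := allP s_pr p p_s; apply/ltnW/ltP/INR_lt.
  exact: Rle_lt_trans (S_classes p p_pr) (A_large p (prime_gt0 p_pr) (allP s_le p p_s)).
have eval_lt : (t ^ d * 2 ^ (d * t * l) * N ^ (t * d) < \prod_(p <- s) p)%N.
  apply: leq_ltn_trans prod_gt; rewrite !expnD; apply: leq_mul; first apply: leq_mul => //.
  - by rewrite expnM; apply: leq_expn2r; exact/ltnW/ltn_expl.
  - by rewrite [X in (_ <= X)%N]expnM; apply: leq_expn2r; exact: ltnW.
have patterns_lt : ((\prod_(p <- s) p) ^ A < 2 ^ (d * t * l * t ^ d))%N.
  by apply: leq_ltn_trans (leq_expn2r A prod_le) _; rewrite -expnM ltn_exp2l.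
have [P [P_neq0 P_size P_coef P_zero]] :=
  exists_box_poly_vanishing (ltnW N_ge2) s_uniq s_pr S_box classes_le eval_lt patterns_lt.
exists P; split=> //; split; first exact: complexity_le_of_bounds N_ge2 l_le P_size P_coef deg_le.
by rewrite /n_zeros (all_filterP P_zero); have := pos_INR (size S); nra.
Qed.
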